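(* Fix $\epsilon>0$, $\delta>0$ and an integer $L\geq 2$ such that $2\epsilon<\delta\leq 1/L$. Then the Opportunistic Bisection strategy (which uses $2L+\lceil\log(1/(\epsilon L))\rceil$ queries) is $(\epsilon,\delta,L)$-private.
   Context: Model: unknown true value $v^*\in[0,1)$; a learner submits queries $q_k\in[0,1)$ and receives $r_k=\mathbb{I}(v^*\geq q_k)$. A learner strategy of length $N$ uses a random seed $Y$ uniform on $\{1,\dots,\mathcal{Y}\}$, with $q_1=\phi_1(Y)$, $q_k=\phi_k(r_1,\dots,r_{k-1},Y)$, and estimate $\hat x=\phi^E(r_1,\dots,r_N,Y)$. $\mathcal{Q}(x)$ is the set of query sequences with positive probability (over $Y$) when $v^*=x$; information set $\mathcal{I}(\overline q)=\{x\in[0,1):\overline q\in\mathcal{Q}(x)\}$. $C_\delta(\mathcal{E})$ is the least number of closed intervals of length at most $\delta$ covering $\mathcal{E}$. A strategy is $(\epsilon,\delta,L)$-private if $\mathbb{P}(|\hat x(x,Y)-x|\leq\epsilon/2)=1$ for all $x\in[0,1)$ and $C_\delta(\mathcal{I}(\overline q))\geq L$ for all $x$ and all $\overline q\in\mathcal{Q}(x)$. Bisection searches: for an interval $\mathcal{J}$ and $M\in\mathbb{N}$, set $\mathcal{J}_1=\mathcal{J}$, $q_i=$ midpoint of $\mathcal{J}_i$, and $\mathcal{J}_{i+1}=[\inf\mathcal{J}_i,q_i)$ or $[q_i,\sup\mathcal{J}_i)$ according as a bit $b_i$ is 0 or 1, for $i=1,\dots,M$. It is a truthful bisection search if $b_i=r_i$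 (the response to $q_i$), and a fictitious bisection search if $b_i=Z_i$ where $Z_1,Z_2,\dots$ are i.i.d. Bernoulli(1/2) generated from $Y$. Opportunistic Bisection strategy: Phase 1: $q_i=(i-1)/L$ for $i=1,\dots,L$, and $q_{L+i}=q_i+\epsilon$ for $i=1,\dots,L$; the intervals $[q_i,q_{i+L})$ are called guesses. Let the sub-intervals be $\mathcal{J}^{(i)}=[(i-1)/L+\epsilon,\ i/L)$, $i=1,\dots,L$. Phase 2 (queries $q_{2L+1},\dots,q_{2L+M}$ with $M=\lceil\log(1/(\epsilon L))\rceil$, log base 2): if no guess contains $v^*$, perform a truthful bisection search of the sub-interval $\mathcal{J}^*$ containing $v^*$; if some guess contains $v^*$, choose a sub-interval uniformly at random (using $Y$) and perform a fictitious bisection search of it. The estimate is the midpoint of the guess containing $v^*$ in the latter case, and otherwise the midpoint of the final interval of the truthful search (the interval adjacent to $q_N$ known to contain $v^*$). *)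

From HB Require Import structures.
From mathcomp Require Import all_boot all_order all_algebra.
From mathcomp Require Import all_classical all_reals all_analysis.

Import Order.TTheory GRing.Theory Num.Theory.
Local Open Scope ring_scope.
Local Open Scope classical_set_scope.

(* A learner strategy of length N with a uniformly random seed Y in the finite
   (nonempty) type s_seed; query q_{k+1} = s_query k [r_1;..;r_k] Y,
   estimate = s_est [r_1;..;r_N] Y. *)
Record strategy (R : realType) := Strategy {
  s_N : nat;
  s_seed : finType;
  s_query : nat -> seq bool -> s_seed -> R;
  s_est : seq bool -> s_seed -> R }.

(* first k responses r_i = I(v* >= q_i) when v* = x and seed y *)
Fixpoint responses (R : realType) (S : strategy R) (x : R) (y : s_seed R S) (k : nat)
  : seq bool :=
  match k with
  | 0 => [::]
  | k'.+1 => let rs := responses R S x y k' in rcons rs (s_query R S k' rs y <= x)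
  end.

Definition queries (R : realType) (S : strategy R) (x : R) (y : s_seed R S) : seq R :=
  [seq s_query R S k (responses R S x y k) y | k <- iota 0 (s_N R S)].

Definition estimate (R : realType) (S : strategy R) (x : R) (y : s_seed R S) : R :=
  s_est R S (responses R S x y (s_N R S)) y.

Definition seed_prob (R : realType) (S : strategy R) (P : pred (s_seed R S)) : R :=
  #|P|%:R / #|s_seed R S|%:R.

Definition Qset (R : realType) (S : strategy R) (x : R) : set (seq R) :=
  [set qb | 0 < seed_prob R S (fun y => queries R S x y == qb)].

Definition info_set (R : realType) (S : strategy R) (qb : seq R) : set R :=
  [set x | (0 <= x < 1) /\ Qset R S x qb].

Definition coverable (R : realType) (delta : R) (E : set R) (n : nat) : Prop :=
  exists a b : 'I_n -> R,
    (forall i, a i <= b i /\ b i - a i <= delta) /\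
    (forall x, E x -> exists i, a i <= x <= b i).

(* C_delta(E) >= L  (C_delta = least such n, +infinity if none exists) *)
Definition Cdelta_ge (R : realType) (delta : R) (E : set R) (L : nat) : Prop :=
  forall n, coverable R delta E n -> (L <= n)%N.

Definition private (R : realType) (eps delta : R) (L : nat) (S : strategy R) : Prop :=
  (forall x : R, 0 <= x < 1 ->
     seed_prob R S (fun y => `|estimate R S x y - x| <= eps / 2) = 1) /\
  (forall (x : R) (qb : seq R), 0 <= x < 1 -> Qset R S x qb ->
     Cdelta_ge R delta (info_set R S qb) L).

(* an interval [a,b) is represented by the pair (a,b) *)
Definition midpt (R : realType) (I : R * R) : R := (I.1 + I.2) / 2.

Definition bisect_step (R : realType) (I : R * R) (b : bool) : R * R :=
  if b then (midpt R I, I.2) else (I.1, midpt R I).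

Definition bisect_interval (R : realType) (J : R * R) (bits : seq bool) : R * R :=
  foldl (bisect_step R) J bits.

Definition obM (R : realType) (eps : R) (L : nat) : nat :=
  absz (Num.ceil (ln (1 / (eps * L%:R)) / ln 2)).

(* sub-interval J^(j+1) = [j/L + eps, (j+1)/L)  (0-indexed j) *)
Definition subint (R : realType) (eps : R) (L j : nat) : R * R :=
  (j%:R / L%:R + eps, j.+1%:R / L%:R).

(* guess number i+1 (0-indexed i) = [q_{i+1}, q_{i+1+L}) contains v* *)
Definition guess_hit (L : nat) (rs : seq bool) (i : nat) : bool :=
  nth false rs i && ~~ nth false rs (i + L).

Definition in_guess (L : nat) (rs : seq bool) : bool := has (guess_hit L rs) (iota 0 L).

(* 0-indexed number of the sub-interval containing v*, read off the responses
   to q_1..q_L (number of k with (k-1)/L <= v*, minus one) *)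
Definition Jstar_index (L : nat) (rs : seq bool) : nat := (count id (take L rs)).-1.

(* seed Y = (uniform sub-interval index, fair bits Z_1..Z_M) *)
Definition ob_seed (L M : nat) : finType := ('I_L * M.-tuple bool)%type.

Definition ob_query (R : realType) (eps : R) (L M : nat) (k : nat) (rs : seq bool)
  (y : ob_seed L M) : R :=
  if (k < L)%N then k%:R / L%:R
  else if (k < 2 * L)%N then (k - L)%:R / L%:R + eps
  else let i := (k - 2 * L)%N in
    if in_guess L rs
    then (* fictitious bisection search of a random sub-interval *)
      midpt R (bisect_interval R (subint R eps L (nat_of_ord y.1)) (take i (val y.2)))
    else (* truthful bisection search of J* *)
      midpt R (bisect_interval R (subint R eps L (Jstar_index L rs)) (take i (drop (2 * L) rs))).

Definition ob_est (R : realType) (eps : R) (L M : nat) (rs : seq bool)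
  (y : ob_seed L M) : R :=
  if in_guess L rs
  then (* midpoint of the guess containing v* *)
    (find (guess_hit L rs) (iota 0 L))%:R / L%:R + eps / 2
  else midpt R (bisect_interval R (subint R eps L (Jstar_index L rs)) (drop (2 * L) rs)).

Definition opportunistic_bisection (R : realType) (eps : R) (L : nat) : strategy R :=
  @Strategy R (2 * L + obM R eps L)%N (ob_seed L (obM R eps L))
    (ob_query R eps L (obM R eps L)) (ob_est R eps L (obM R eps L)).

From HB Require Import structures.
From mathcomp Require Import all_boot all_order all_algebra.
From mathcomp Require Import all_classical all_reals all_analysis.
From mathcomp Require Import zify ring lra.
Import Order.TTheory GRing.Theory Num.Theory.
Local Open Scope ring_scope.

(* Accuracy: if v* lies in a guess the estimate is the midpoint of that guess;
   otherwise v* lies in the sub-interval J* read off the first L answers, and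
   M truthful bisection steps shrink J* to width at most (1/L)/2^M <= eps.
   Privacy: the phase-1 queries are fixed, and in phase 2 a point lying in a
   guess is queried according to its seed alone.  A truthful search of J* is
   exactly the fictitious search that the seed (J*, answers) would produce, so
   every observed query sequence is also produced, with positive probability,
   by the point j(1 + eps)/L of the j-th guess, for each j < L.  These L points
   are more than 1/L >= delta apart, so covering them takes L intervals of
   length delta. *)

Section Strategies.
Context {R : realType} {S : strategy R}.

Lemma size_responses x y k : size (responses R S x y k) = k.
Proof. by elim: k => //= k IH; rewrite size_rcons IH. Qed.

Lemma responses_prefix x y k n :
  (k <= n)%N -> responses R S x y k = take k (responses R S x y n).
Proof.
elim: n => [|n IH]; first by rewrite leqn0 => /eqP ->.
rewrite leq_eqVlt => /orP [/eqP ->|]; first by rewrite take_oversize // size_responses.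
by rewrite ltnS => kn /=; rewrite -cats1 takel_cat ?size_responses // IH.
Qed.

Lemma nth_responses x y k n : (k < n)%N ->
  nth false (responses R S x y n) k = (s_query R S k (responses R S x y k) y <= x).
Proof.
move=> kn; rewrite -(nth_take false (ltnSn k)) -responses_prefix //=.
by rewrite nth_rcons size_responses ltnn eqxx.
Qed.

Lemma QsetP x qb : Qset R S x qb <-> exists y, queries R S x y = qb.
Proof.
rewrite /Qset /seed_prob /=; split.
- case: (pickP (fun y => queries R S x y == qb)) => [y /eqP <- _ | none].
    by exists y.
  by rewrite (eq_card0 none) mul0r ltxx.
- move=> [y <-]; apply: divr_gt0; rewrite ltr0n; apply/card_gt0P.
    by exists y; rewrite unfold_in /=.
  by exists y.
Qed.

Lemma seed_prob_all (P : pred (s_seed R S)) :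
  (0 < #|s_seed R S|)%N -> (forall y, P y) -> seed_prob R S P = 1.
Proof.
move=> seed_gt0 allP; rewrite /seed_prob (@eq_card _ _ (s_seed R S)) ?divff //.
by rewrite pnatr_eq0 -lt0n.
Qed.

End Strategies.

Lemma Cdelta_ge_separated (R : realType) (delta : R) (E : set R) (L : nat)
    (p : 'I_L -> R) :
  (forall i j : 'I_L, (i < j)%N -> delta < p j - p i) -> (forall i, E (p i)) ->
  Cdelta_ge R delta E L.
Proof.
move=> sep Ep n [a [b [ab_delta cover]]].
have [c p_in_c] := choice (fun i => cover (p i) (Ep i)).
suff /leq_card : injective c by rewrite !card_ord.
have close i j : c i = c j -> p j - p i <= delta.
  move=> cij; have [_ width] := ab_delta (c j).
  have /andP[ai _] := p_in_c i; have /andP[_ bj] := p_in_c j.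
  by rewrite cij in ai; lra.
move=> i j cij; apply/val_inj; case: (ltngtP i j) => // ij; exfalso.
- by have := sep _ _ ij; have := close _ _ cij; lra.
- by have := sep _ _ ij; have := close _ _ (esym cij); lra.
Qed.

Lemma count_iota_downward (P : pred nat) n : (forall k, P k.+1 -> P k) ->
  forall k, (k < n)%N -> P k = (k < count P (iota 0 n))%N.
Proof.
move=> down.
have downP : {homo P : i j / (i <= j)%N >-> (j -> i)}.
  by apply: (homo_leq (r := fun a b : bool => b -> a)) => [a|a b c ab bc /bc /ab|i /down].
elim: n => // n IH k; rewrite ltnS => k_n.
have count_le : (count P (iota 0 n) <= n)%N.
  by rewrite -[leqRHS](size_iota 0 n) count_size.
rewrite -[n.+1]addn1 iotaD count_cat /= addn0 add0n.
case Pn: (P n) => /=.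
- have /eqP -> : count P (iota 0 n) == n.
    rewrite -[X in _ == X](size_iota 0 n) -all_count; apply/allP => i.
    by rewrite mem_iota => /andP[_ i_n]; apply: downP Pn; apply: ltnW.
  by rewrite addn1 ltnS k_n; apply: downP Pn.
- move: k_n; rewrite addn0 leq_eqVlt => /orP[/eqP -> | /IH //].
  by rewrite Pn ltnNge count_le.
Qed.

Lemma take_drop_take (T : Type) (s : seq T) n i :
  take i (drop n (take (n + i) s)) = take i (drop n s).
Proof. by rewrite !take_drop take_takel // addnC. Qed.

Section Bisection.
Context {R : realType}.

Definition truthful_bits (J : R * R) (x : R) (bits : seq bool) : Prop :=
  forall i, (i < size bits)%N ->
    nth false bits i = (midpt R (bisect_interval R J (take i bits)) <= x).

Lemma bisect_interval_width J bits :
  (bisect_interval R J bits).2 - (bisect_interval R J bits).1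
  = (J.2 - J.1) / 2 ^+ size bits.
Proof.
elim: bits J => [|b bits IH] J /=; first by rewrite expr0 divr1.
rewrite IH exprS invfM mulrA; congr (_ / _).
by rewrite /bisect_step /midpt; case: b => /=; field.
Qed.

Lemma bisect_interval_mem {J x bits} : J.1 <= x < J.2 -> truthful_bits J x bits ->
  (bisect_interval R J bits).1 <= x < (bisect_interval R J bits).2.
Proof.
elim: bits J => [|b bits IH] J x_J truthful //=.
apply: IH => [|i lt_i]; last exact: (truthful i.+1 lt_i).
have -> : b = (midpt R J <= x) by apply: (truthful 0%N).
move: x_J; rewrite /bisect_step.
by case: (leP (midpt R J) x) => /= [-> /andP[_ ->] | -> /andP[-> _]].
Qed.

Lemma midpt_dist {I : R * R} {x : R} : I.1 <= x < I.2 ->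
  `|midpt R I - x| <= (I.2 - I.1) / 2.
Proof. by move=> /andP[? ?]; rewrite /midpt ler_norml; apply/andP; split; lra. Qed.

End Bisection.

Lemma ceil_log2_inv {R : realType} (t : R) : 0 < t ->
  1 <= t * 2 ^+ `|Num.ceil (ln (1 / t) / ln 2)|%N.
Proof.
move=> t_gt0.
set s := ln (1 / t) / ln 2; set M := `|Num.ceil s|%N.
have ln2_gt0 : 0 < ln (2 : R) by apply: ln_gt0; lra.
have s_M : s <= M%:R.
  rewrite /M natr_absz; apply: le_trans (ceil_ge s) _.
  by rewrite ler_int ler_norm.
have : ln (1 / t) <= ln ((2 : R) ^+ M).
  rewrite lnXn; last lra.
  have -> : ln (1 / t) = s * ln 2 by rewrite /s divfK ?gt_eqF.
  by rewrite -[leRHS]mulr_natl ler_pM2r.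
have two_M_gt0 : 0 < (2 : R) ^+ M by apply: exprn_gt0; lra.
rewrite ler_ln ?posrE ?divr_gt0 // ler_pdivrMr //.
by rewrite mulrC.
Qed.

Section OpportunisticBisection.
Variables (R : realType) (eps : R) (L M : nat).
Hypotheses (eps_gt0 : 0 < eps) (L_gt0 : (0 < L)%N).

(* [opportunistic_bisection R eps L] is [ob_strategy] with [M := obM R eps L];
   all that is used about [M] is [1 <= eps * L * 2 ^+ M]. *)
Definition ob_strategy : strategy R :=
  @Strategy R (2 * L + M) (ob_seed L M) (ob_query R eps L M) (ob_est R eps L M).

Definition guess (j : nat) : R * R := (j%:R / L%:R, j%:R / L%:R + eps).

Local Notation N := (2 * L + M)%N.
Local Notation responses_at x y := (responses R ob_strategy x y N).

Lemma L_gt0R : 0 < L%:R :> R.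
Proof. by rewrite ltr0n. Qed.

Lemma ob_query_guess_start k rs y :
  (k < L)%N -> ob_query R eps L M k rs y = (guess k).1.
Proof. by rewrite /ob_query => ->. Qed.

Lemma ob_query_guess_end k rs y :
  (k < L)%N -> ob_query R eps L M (k + L) rs y = (guess k).2.
Proof.
move=> k_L; rewrite /ob_query addnK.
have -> : (k + L < L)%N = false by lia.
by have -> : (k + L < 2 * L)%N by lia.
Qed.

Lemma ob_query_phase2 i rs y :
  ob_query R eps L M (2 * L + i) rs y =
  if in_guess L rs
  then midpt R (bisect_interval R (subint R eps L y.1) (take i (val y.2)))
  else midpt R (bisect_interval R (subint R eps L (Jstar_index L rs))
                  (take i (drop (2 * L) rs))).
Proof.
rewrite /ob_query addKn.
have -> : (2 * L + i < L)%N = false by lia.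
by have -> : (2 * L + i < 2 * L)%N = false by lia.
Qed.

Lemma in_guess_prefix k rs : (2 * L <= k)%N -> in_guess L (take k rs) = in_guess L rs.
Proof.
move=> k_ge; apply: eq_in_has => i; rewrite mem_iota => /andP[_ i_L].
by rewrite /guess_hit !nth_take //; lia.
Qed.

Lemma Jstar_index_prefix k rs : (L <= k)%N -> Jstar_index L (take k rs) = Jstar_index L rs.
Proof. by move=> k_ge; rewrite /Jstar_index take_takel. Qed.

Lemma ob_response_guess_start x y k :
  (k < L)%N -> nth false (responses_at x y) k = ((guess k).1 <= x).
Proof.
by move=> k_L; rewrite nth_responses /= ?ob_query_guess_start //; lia.
Qed.

Lemma ob_response_guess_end x y k :
  (k < L)%N -> nth false (responses_at x y) (k + L) = ((guess k).2 <= x).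
Proof.
by move=> k_L; rewrite nth_responses /= ?ob_query_guess_end //; lia.
Qed.

Lemma guess_hit_responses x y j : (j < L)%N ->
  guess_hit L (responses_at x y) j = ((guess j).1 <= x < (guess j).2).
Proof.
move=> j_L.
by rewrite /guess_hit ob_response_guess_start // ob_response_guess_end // -ltNge.
Qed.

Lemma in_guess_responses x y :
  in_guess L (responses_at x y) = has (fun j => (guess j).1 <= x < (guess j).2) (iota 0 L).
Proof.
by apply: eq_in_has => j; rewrite mem_iota => /andP[_ j_L]; apply: guess_hit_responses.
Qed.

Lemma Jstar_index_spec x y : 0 <= x < 1 ->
  let j := Jstar_index L (responses_at x y) in
  (j < L)%N /\ j%:R / L%:R <= x < j.+1%:R / L%:R.
Proof.
move=> /andP[x_ge0 x_lt1] /=.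
pose P k := k%:R / L%:R <= x.
have count_P : count id (take L (responses_at x y)) = count P (iota 0 L).
  rewrite -(mkseq_nth false (take L _)) size_takel; last by rewrite size_responses; lia.
  rewrite /mkseq count_map; apply: eq_in_count => k; rewrite mem_iota => /andP[_ k_L].
  by rewrite /= nth_take // ob_response_guess_start.
have P_down k : P k.+1 -> P k.
  apply: le_trans; rewrite ler_pM2r ?invr_gt0 ?L_gt0R // ler_nat; lia.
have P_count := @count_iota_downward P L P_down.
rewrite /Jstar_index count_P; set c := count P (iota 0 L).
have c_L : (c <= L)%N by rewrite -[leqRHS](size_iota 0 L) count_size.
have c_gt0 : (0 < c)%N by rewrite -P_count // /P mul0r.
have P_pred : P c.-1 by rewrite P_count ?prednK ?ltn_predL //; lia.
split; first lia.
rewrite prednK //; apply/andP; split; first exact: P_pred.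
case: (ltnP c L) => [c_lt | c_ge]; first by rewrite ltNge -/(P c) P_count // ltnn.
have -> : c = L by lia.
by rewrite divff ?gt_eqF ?L_gt0R.
Qed.

Lemma subint_width j :
  (subint R eps L j).2 - (subint R eps L j).1 = 1 / L%:R - eps.
Proof. by rewrite /subint /= -natr1 mulrDl; lra. Qed.

Lemma ob_truthful_phase2 x y : ~~ in_guess L (responses_at x y) ->
  truthful_bits (subint R eps L (Jstar_index L (responses_at x y))) x
    (drop (2 * L) (responses_at x y)).
Proof.
move=> no_guess i; rewrite size_drop size_responses addKn => i_M.
rewrite nth_drop nth_responses; last lia.
rewrite (@responses_prefix _ _ _ _ _ N) /=; last lia.
rewrite ob_query_phase2 in_guess_prefix ?leq_addr // (negbTE no_guess).
rewrite Jstar_index_prefix; last lia.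
by rewrite take_drop_take.
Qed.

Lemma ob_estimate_in_guess x y : in_guess L (responses_at x y) ->
  `|estimate R ob_strategy x y - x| <= eps / 2.
Proof.
move=> hit; rewrite /estimate /= /ob_est hit.
set i := find _ _.
have i_L : (i < L)%N by move: hit; rewrite /in_guess has_find size_iota.
have := nth_find 0%N hit; rewrite -/i nth_iota // add0n guess_hit_responses // => x_i.
have -> : i%:R / L%:R + eps / 2 = midpt R (guess i) by rewrite /midpt /=; lra.
by apply: le_trans (midpt_dist x_i) _; rewrite /= addrAC subrr add0r lexx.
Qed.

Lemma ob_estimate_outside_guess x y :
  1 <= eps * L%:R * 2 ^+ M -> 0 <= x < 1 -> ~~ in_guess L (responses_at x y) ->
  `|estimate R ob_strategy x y - x| <= eps / 2.
Proof.
move=> M_large x01 no_guess; rewrite /estimate /= /ob_est (negbTE no_guess).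
have [j_L /andP[j_x x_j]] := Jstar_index_spec x y x01.
set j := Jstar_index L _ in j_L j_x x_j *.
have x_J : (subint R eps L j).1 <= x < (subint R eps L j).2.
  move: no_guess; rewrite in_guess_responses => /hasPn /(_ j).
  by rewrite mem_iota j_L /= j_x /= -leNgt x_j andbT => ->.
apply: le_trans (midpt_dist (bisect_interval_mem x_J (ob_truthful_phase2 x y no_guess))) _.
rewrite bisect_interval_width size_drop size_responses addKn subint_width.
have two_M_gt0 : 0 < (2 : R) ^+ M by apply: exprn_gt0; lra.
have width_J : 1 / L%:R <= eps * 2 ^+ M by rewrite ler_pdivrMr ?L_gt0R // mulrAC.
rewrite ler_pM2r ?invr_gt0 // ler_pdivrMr //.
by apply: le_trans width_J; rewrite gerBl ltW.
Qed.

Lemma ob_accurate x y : 1 <= eps * L%:R * 2 ^+ M -> 0 <= x < 1 ->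
  `|estimate R ob_strategy x y - x| <= eps / 2.
Proof.
move=> M_large x01; case: (boolP (in_guess L (responses_at x y))).
- exact: ob_estimate_in_guess.
- exact: ob_estimate_outside_guess.
Qed.

Lemma ob_queries_reproducible x y x' :
  has (fun j => (guess j).1 <= x' < (guess j).2) (iota 0 L) ->
  exists y', queries R ob_strategy x' y' = queries R ob_strategy x y.
Proof.
move=> x'_guess; set rs := responses_at x y.
have J_L : (Jstar_index L rs < L)%N.
  rewrite /Jstar_index; have := count_size id (take L rs).
  by rewrite size_takel ?size_responses; lia.
have size_bits : size (drop (2 * L) rs) == M by rewrite size_drop size_responses addKn.
exists (if in_guess L rs then y else (Ordinal J_L, Tuple size_bits)).
rewrite /queries; apply/eq_in_map => k; rewrite mem_iota add0n => /andP[_ k_N].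
rewrite !(@responses_prefix _ _ _ _ k N (ltnW k_N)) /=.
case: (ltnP k L) => [k_L | L_k]; first by rewrite !ob_query_guess_start.
case: (ltnP k (2 * L)) => [k_2L | two_L_k].
  have -> : k = (k - L + L)%N by lia.
  by rewrite !ob_query_guess_end //; lia.
have -> : k = (2 * L + (k - 2 * L))%N by lia.
rewrite !ob_query_phase2 !in_guess_prefix ?leq_addr // in_guess_responses x'_guess.
case: (in_guess L rs) => //=.
rewrite Jstar_index_prefix; last lia.
by rewrite take_drop_take.
Qed.

(* Consecutive guess points are (1 + eps)/L > 1/L apart. *)
Definition guess_point (j : nat) : R := j%:R * (1 + eps) / L%:R.

Lemma guess_point_in_guess j : (j < L)%N ->
  (guess j).1 <= guess_point j < (guess j).2.
Proof.
move=> j_L; have j_ge0 : 0 <= j%:R / L%:R :> R by rewrite divr_ge0.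
have j_lt1 : j%:R / L%:R < 1 :> R by rewrite ltr_pdivrMr ?L_gt0R // mul1r ltr_nat.
have -> : guess_point j = j%:R / L%:R + j%:R / L%:R * eps.
  by rewrite /guess_point; field; rewrite gt_eqF ?L_gt0R.
rewrite /guess /= lerDl ltrD2l gtr_pMl // j_lt1 andbT.
by rewrite mulr_ge0 // ltW.
Qed.

Lemma guess_point_lt1 j : eps <= 1 / L%:R -> (j < L)%N -> guess_point j < 1.
Proof.
move=> eps_small j_L; have /andP[_ lt_end] := guess_point_in_guess j j_L.
apply: lt_le_trans lt_end _; rewrite /guess /=.
have : j.+1%:R / L%:R <= 1 :> R by rewrite ler_pdivrMr ?L_gt0R // mul1r ler_nat.
by rewrite -natr1 mulrDl; lra.
Qed.

Lemma guess_point_sep j1 j2 : (j1 < j2)%N ->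
  1 / L%:R < guess_point j2 - guess_point j1.
Proof.
move=> lt_j; have L_pos := L_gt0R.
have gap : 1 <= j2%:R - j1%:R :> R by rewrite lerBrDr addrC natr1 ler_nat.
have -> : guess_point j2 - guess_point j1 = (j2%:R - j1%:R) * ((1 + eps) / L%:R).
  by rewrite /guess_point; ring.
have step : 1 / L%:R < (1 + eps) / L%:R by rewrite ltr_pM2r ?invr_gt0 // ltrDl.
apply: (lt_le_trans step); rewrite ler_peMl //.
by apply: ltW; apply: lt_trans step; rewrite mul1r invr_gt0.
Qed.

Lemma guess_point_info_set x qb j : eps <= 1 / L%:R ->
  Qset R ob_strategy x qb -> (j < L)%N -> info_set R ob_strategy qb (guess_point j).
Proof.
move=> eps_small /QsetP[y <-] j_L; split.
  have /andP[j_le _] := guess_point_in_guess j j_L.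
  rewrite guess_point_lt1 // andbT; apply: le_trans j_le; exact: divr_ge0.
apply/QsetP; apply: ob_queries_reproducible; apply/hasP; exists j.
  by rewrite mem_iota.
exact: guess_point_in_guess.
Qed.

Lemma ob_info_set_Cdelta_ge delta x qb : eps <= 1 / L%:R -> delta <= 1 / L%:R ->
  Qset R ob_strategy x qb -> Cdelta_ge R delta (info_set R ob_strategy qb) L.
Proof.
move=> eps_small delta_small x_qb.
apply: (@Cdelta_ge_separated _ _ _ _ (fun j : 'I_L => guess_point j)) => [i j ij | j].
- exact: le_lt_trans delta_small (guess_point_sep i j ij).
- exact: guess_point_info_set x_qb (ltn_ord j).
Qed.

End OpportunisticBisection.

Theorem proposition1 (R : realType) (eps delta : R) (L : nat) :
  0 < eps -> 0 < delta -> (2 <= L)%N -> 2 * eps < delta -> delta <= 1 / L%:R ->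
  private R eps delta L (opportunistic_bisection R eps L).
Proof.
move=> eps_gt0 _ L_ge2 eps_delta delta_L.
have L_gt0 : (0 < L)%N by apply: leq_trans L_ge2.
have eps_L : eps <= 1 / L%:R by lra.
have M_large : 1 <= eps * L%:R * 2 ^+ obM R eps L.
  by apply: ceil_log2_inv; rewrite mulr_gt0 // ltr0n.
split => [x x01 | x qb _ x_qb].
- apply: seed_prob_all => [|y]; last exact: ob_accurate.
  by rewrite card_prod card_tuple card_bool card_ord muln_gt0 expn_gt0 L_gt0.
- exact: ob_info_set_Cdelta_ge x_qb.
Qed.
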